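(* With the setting in the context, let $m\in\mathrm{hom}(C,G)_0$. The clock operator $Q_m$ distinguishes between ground states, in the sense that for every $f\in\ker(\delta^0)$ the vector $Q_m\mathcal A_0|f\rangle$ is a scalar multiple of $\mathcal A_0|f\rangle$, if and only if $m\in\ker(\delta_0)$, i.e. $m(\delta^{-1}t)=1$ for all $t\in\mathrm{hom}(C,G)^{-1}$.
   Context: $(C_\bullet,\partial^C_\bullet)$ is a chain complex with each $C_n$ free abelian on a finite set $K_n$, $K_n\ne\emptyset$ for finitely many $n$; $(G_\bullet,\partial^G_\bullet)$ is a chain complex of finite abelian groups. $\mathrm{hom}(C,G)^p=\prod_n\mathrm{Hom}(C_n,G_{n-p})$ with $(\delta^pf)_n=f_{n-1}\partial^C_n-(-1)^p\partial^G_{n-p}f_n$. $\mathrm{hom}(C,G)_p=\mathrm{Hom}(\mathrm{hom}(C,G)^p,U(1))$ (written additively), $\chi_m(f)=m(f)$, and $\delta_0:\mathrm{hom}(C,G)_0\to\mathrm{hom}(C,G)_{-1}$, $\delta_0m=m\circ\delta^{-1}$. $\mathcal H=\bigotimes_n\bigotimes_{x\in K_n}\mathbb C[G_n]$ with orthonormal basis $|f\rangle$, $f\in\mathrm{hom}(C,G)^0$. $Q_m|f\rangle=\chi_m(f)|f\rangle$, $P_t|f\rangle=|f+t\rangle$, $A_t=P_{\delta^{-1}t}$ for $t\in\mathrm{hom}(C,G)^{-1}$, and $\mathcal A_0=\frac1{|\mathrm{hom}(C,G)^{-1}|}\sum_{t\in\mathrm{hom}(C,G)^{-1}}A_t$.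 *)

From HB Require Import structures.
From mathcomp Require Import all_boot all_order all_algebra.
Set Implicit Arguments. Unset Strict Implicit. Unset Printing Implicit Defensive.
Import Order.TTheory GRing.Theory Num.Theory.
Local Open Scope ring_scope.

(* Encoding of the data:
   - the bases K_n of the free abelian groups C_n are packed into one finite
     type K with a degree map deg : K -> int, K_n = [pred x | deg x == n];
   - the boundary d^C_n is given by its integer matrix a : for deg x = n,
     d^C_n x = \sum_(y | deg y == n - 1) a x y * y;
   - G : int -> finZmodType, with boundaries dG n : G n -> G (n - 1);
   - an element of Hom(C_n, G_m) is identified with its values on the basis
     K_n, hence hom(C,G)^p = prod_n Hom(C_n, G_(n-p)) is the finite type of
     dependent functions forall x : K, G (deg x - p). *)

(* transport between (possibly different) degrees: identity when the indices
   agree, 0 otherwise (only used where the indices agree or the term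
   must vanish) *)
Definition gcast (G : int -> finZmodType) (n k : int) (g : G n) : G k :=
  match @eqP _ n k with
  | ReflectT e => eq_rect n G g k e
  | ReflectF _ => 0
  end.

Definition homp (K : finType) (deg : K -> int) (G : int -> finZmodType) (p : int)
  := {dffun forall x : K, G (deg x - p)}.

Definition hzero K deg G p : @homp K deg G p := [ffun x => 0].
Definition hadd K deg G p (f g : @homp K deg G p) : homp deg G p :=
  [ffun x => f x + g x].
Definition hsub K deg G p (f g : @homp K deg G p) : homp deg G p :=
  [ffun x => f x - g x].

(* the differential delta^p : hom^p -> hom^(p+1),
   (delta^p f)_n = f_(n-1) d^C_n - (-1)^p d^G_(n-p) f_n *)
Definition delta (K : finType) (deg : K -> int) (a : K -> K -> int)
  (G : int -> finZmodType) (dG : forall n, G n -> G (n - 1)) (p : int)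
  (f : homp deg G p) : homp deg G (p + 1) :=
  [ffun x => \sum_(y | deg y == deg x - 1)
                 @gcast G (deg y - p) (deg x - (p + 1)) (f y *~ a x y)
             - @gcast G (deg x - p - 1) (deg x - (p + 1))
                 (dG (deg x - p) (f x) *~ ((-1) ^ p))].

Definition chainC (K : finType) (deg : K -> int) (a : K -> K -> int) :=
  forall x z : K, deg z = deg x - 2 ->
    \sum_(y | deg y == deg x - 1) a x y * a y z = 0.
Definition chainG (G : int -> finZmodType) (dG : forall n, G n -> G (n - 1)) :=
  (forall n (g h : G n), dG n (g - h) = dG n g - dG n h) /\
  (forall n (g : G n), dG (n - 1) (dG n g) = 0).

(* m in hom(C,G)_0 = Hom(hom(C,G)^0, U(1)) : a homomorphism into the unit
   circle of the complex field CC *)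
Definition U1_char (CC : numClosedFieldType) K deg G
  (m : @homp K deg G 0 -> CC) :=
  (forall f g, m (hadd f g) = m f * m g) /\ (forall f, `|m f| = 1).

(* the Hilbert space: CC-valued functions on the basis hom(C,G)^0 *)
Notation hilb CC deg G := {ffun homp deg G 0 -> CC}.

Definition ket (CC : numClosedFieldType) K deg G (f : @homp K deg G 0)
  : hilb CC deg G := [ffun g => (g == f)%:R].

Definition Qop (CC : numClosedFieldType) K deg G (m : @homp K deg G 0 -> CC)
  (v : hilb CC deg G) : hilb CC deg G := [ffun g => m g * v g].

(* P_t |f> = |f + t> *)
Definition Pop (CC : numClosedFieldType) K deg G (t : @homp K deg G 0)
  (v : hilb CC deg G) : hilb CC deg G := [ffun g => v (hsub g t)].

Definition Aop (CC : numClosedFieldType) K deg a G dG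
  (t : @homp K deg G (-1)) (v : hilb CC deg G) : hilb CC deg G :=
  Pop (@delta K deg a G dG (-1) t) v.

Definition A0op (CC : numClosedFieldType) K deg a G dG
  (v : hilb CC deg G) : hilb CC deg G :=
  [ffun g => (#|{: @homp K deg G (-1)}|%:R : CC)^-1 *
             \sum_(t : homp deg G (-1)) Aop a dG t v g].

Definition scalar_multiple (CC : numClosedFieldType) K deg G
  (u v : hilb CC deg G) : Prop :=
  exists c : CC, forall g : @homp K deg G 0, u g = c * v g.

From HB Require Import structures.
From mathcomp Require Import all_boot all_order all_algebra.
Import Order.TTheory GRing.Theory Num.Theory.
Local Open Scope ring_scope.
Set Implicit Arguments. Unset Strict Implicit.

(* A_0|f> is, up to the factor 1/|hom^(-1)|, the uniform superposition of the
   |f + delta t>, i.e. it is supported by the coset f + im delta^(-1).  If the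
   character m is trivial on im delta^(-1), it is constant (equal to m f) on
   that coset, so Q_m acts on A_0|f> as the scalar m f.  Conversely, the ground
   state A_0|0> does not vanish at any delta t, so being an eigenvector of Q_m
   forces m to be constant on im delta^(-1), with value m (delta 0) = m 0 = 1. *)

Lemma gcast0 (G : int -> finZmodType) (n k : int) : @gcast G n k 0 = 0.
Proof. by rewrite /gcast; case: eqP => // e; case: k / e. Qed.

Section HomGroup.
Variables (K : finType) (deg : K -> int) (G : int -> finZmodType).

Lemma hsubK p (g t : homp deg G p) : hadd (hsub g t) t = g.
Proof. by apply/ffunP => x; rewrite !ffunE subrK. Qed.

Lemma hsubrr p (g : homp deg G p) : hsub g g = hzero deg G p.
Proof. by apply/ffunP => x; rewrite !ffunE subrr. Qed.

Lemma haddr0 p (f : homp deg G p) : hadd f (hzero deg G p) = f.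
Proof. by apply/ffunP => x; rewrite !ffunE addr0. Qed.

Lemma U1_char_hzero (CC : numClosedFieldType) (m : homp deg G 0 -> CC) :
  U1_char m -> m (hzero deg G 0) = 1.
Proof.
move=> [mM m_norm1].
have m0_neq0 : m (hzero deg G 0) != 0 by rewrite -normr_eq0 m_norm1 oner_eq0.
by apply: (mulfI m0_neq0); rewrite mulr1 -mM haddr0.
Qed.

End HomGroup.

Lemma delta_hzero (K : finType) (deg : K -> int) (a : K -> K -> int)
    (G : int -> finZmodType) (dG : forall n : int, G n -> G (n - 1))
    (hG : chainG dG) (p : int) :
  delta a dG (hzero deg G p) = hzero deg G (p + 1).
Proof.
case: hG => dG_sub _; apply/ffunP => x.
have dG0 : dG (deg x - p) 0 = 0 by rewrite -(subrr 0) dG_sub subrr.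
rewrite !ffunE dG0 mul0rz gcast0 subr0 big1 // => y _.
by rewrite ffunE mul0rz gcast0.
Qed.

Section GroundStates.
Variables (CC : numClosedFieldType) (K : finType) (deg : K -> int)
  (a : K -> K -> int) (G : int -> finZmodType)
  (dG : forall n : int, G n -> G (n - 1)).

Local Notation N := (#|{: homp deg G (-1)}|%:R : CC).

Lemma A0op_ketE (f g : homp deg G 0) :
  A0op a dG (ket CC f) g =
  N^-1 * \sum_(t : homp deg G (-1)) ((hsub g (delta a dG t) == f)%:R : CC).
Proof. by rewrite ffunE; congr (_ * _); apply: eq_bigr => t _; rewrite !ffunE. Qed.

Lemma A0op_ket_neq0 (f g : homp deg G 0) (t : homp deg G (-1)) :
  hsub g (delta a dG t) = f -> A0op a dG (ket CC f) g != 0.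
Proof.
move=> gt_f; rewrite A0op_ketE mulf_eq0 negb_or invr_eq0 pnatr_eq0 -lt0n.
rewrite (bigD1 t) //= gt_f eqxx paddr_eq0 ?oner_eq0 ?andbF ?andbT //.
- by apply/card_gt0P; exists t.
- by apply: sumr_ge0 => s _; rewrite ler0n.
Qed.

Lemma Qop_A0op_ket (m : homp deg G 0 -> CC) :
    (forall f g, m (hadd f g) = m f * m g) ->
    (forall t : homp deg G (-1), m (delta a dG t) = 1) ->
  forall f g : homp deg G 0,
  Qop m (A0op a dG (ket CC f)) g = m f * A0op a dG (ket CC f) g.
Proof.
move=> mM m_im1 f g; rewrite ffunE A0op_ketE mulrCA [m f * _]mulrCA.
congr (_ * _); rewrite !mulr_sumr; apply: eq_bigr => t _.
case: eqP => [<-|_]; last by rewrite !mulr0.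
by rewrite !mulr1 -[in m g](hsubK g (delta a dG t)) mM m_im1 mulr1.
Qed.

End GroundStates.

Theorem proposition6 (CC : numClosedFieldType) (K : finType) (deg : K -> int)
  (a : K -> K -> int) (G : int -> finZmodType)
  (dG : forall n : int, G n -> G (n - 1))
  (hC : chainC deg a) (hG : chainG dG)
  (m : homp deg G 0 -> CC) (hm : U1_char m) :
  (forall f : homp deg G 0, delta a dG f = hzero deg G (0 + 1) ->
     scalar_multiple (Qop m (A0op a dG (ket CC f))) (A0op a dG (ket CC f)))
  <-> (forall t : homp deg G (-1), m (delta a dG t) = 1).
Proof.
split=> [ground t0 | m_im1 f _]; last first.
  by exists (m f); apply: Qop_A0op_ket; case: hm.
have [c Qc] := ground _ (delta_hzero deg a hG 0).
have m_im_c (t : homp deg G (-1)) : m (delta a dG t) = c.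
  have := Qc (delta a dG t); rewrite ffunE.
  exact/mulIf/A0op_ket_neq0/hsubrr.
by rewrite m_im_c -(m_im_c (hzero deg G (-1))) delta_hzero // U1_char_hzero.
Qed.
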